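(* Let $p,q\in\mathbb N$ and $A\in\mathrm{Rec}_{p\times q}(\mathbb Q)$. Then there exists a non-zero natural integer $N$ such that $N^{n+1}A[U,W]\in\mathbb Z$ for all $n\in\mathbb N$ and all $(U,W)\in\mathcal M_{p\times q}^n$.
   Context: $\mathcal M_{p\times q}^n$ is the set of pairs $(U,W)$ of words of common length $n$ with $U\in\{0,\dots,p-1\}^n$, $W\in\{0,\dots,q-1\}^n$, $\mathcal M_{p\times q}=\bigcup_n\mathcal M_{p\times q}^n$. For $A:\mathcal M_{p\times q}\to\mathbb Q$ (values $A[U,W]$), $(\rho(S,T)A)[U,W]=A[US,WT]$. $\mathrm{Rec}_{p\times q}(\mathbb Q)$ is the set of $A$ whose linear span of $\{\rho(S,T)A\}$ is finite-dimensional. *)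

From mathcomp Require Import all_boot all_order all_algebra.
Set Implicit Arguments. Unset Strict Implicit. Unset Printing Implicit Defensive.
Import Order.TTheory GRing.Theory Num.Theory.
Local Open Scope ring_scope.

(* A function A : M_{p x q} -> Q is represented as a function on pairs of
   words (seq 'I_p, seq 'I_q); only its values on pairs of equal length
   (the elements of M_{p x q}) are meaningful. *)
Definition series (p q : nat) := seq 'I_p -> seq 'I_q -> rat.

Definition rho (p q : nat) (S : seq 'I_p) (T : seq 'I_q) (A : series p q)
  : series p q := fun U W => A (U ++ S) (W ++ T).

Definition Rec (p q : nat) (A : series p q) : Prop :=
  exists (k : nat) (B : 'I_k -> series p q),
    forall (S : seq 'I_p) (T : seq 'I_q), size S = size T ->
      exists c : 'I_k -> rat,
        forall (U : seq 'I_p) (W : seq 'I_q), size U = size W ->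
          rho S T A U W = \sum_(i < k) c i * B i U W.

From mathcomp Require Import all_boot all_order all_algebra.
From mathcomp Require Import zify.
From Stdlib Require Import Classical.

Set Implicit Arguments.
Unset Strict Implicit.
Unset Printing Implicit Defensive.
Import Order.TTheory GRing.Theory Num.Theory.
Local Open Scope ring_scope.

(* The shifts rho(S,T) A span a finite-dimensional space, so finitely many of
   them, A_0 = A, A_1, ..., A_m, already span all shifts; in particular
   A_j[Ux, Wy] = sum_i c_(x,y,j,i) A_i[U, W] for rational c.  If D clears the
   denominators of all c_(x,y,j,i) and all A_j[eps, eps], induction on the
   length n of (U, W) shows that D^(n+1) A_j[U, W] is an integer. *)

Lemma exists_spanning_seq (K : fieldType) (vT : vectType K) (I : eqType)
    (P : I -> Prop) (f : I -> vT) :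
  exists s : seq I, {in s, forall i, P i} /\
    forall i, P i -> f i \in <<map f s>>%VS.
Proof.
suff grow m s : {in s, forall i, P i} ->
    (\dim {:vT} - \dim <<map f s>> <= m)%N ->
  exists s : seq I, {in s, forall i, P i} /\
    forall i, P i -> f i \in <<map f s>>%VS.
  by apply: (grow _ [::]) => [i|]; rewrite ?in_nil ?leq_subr.
elim: m s => [|m IH] s sP codim_s.
  exists s; split=> // i _; suff ->: <<map f s>>%VS = fullv by apply: memvf.
  apply/eqP; rewrite -(dimv_leqif_eq (subvf _)) eqn_leq dimvS ?subvf //=.
  by rewrite -subn_eq0 -leqn0.
case: (classic (forall i, P i -> f i \in <<map f s>>%VS)) => [|not_spanning].
  by exists s.
have [i not_i] := not_all_ex_not _ _ not_spanning.
have [Pi fi_out] := imply_to_and _ _ not_i.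
apply: (IH (i :: s)); first by move=> j /predU1P[->|/sP].
have dim_grows : (\dim <<map f s>> < \dim <<map f (i :: s)>>)%N.
  rewrite /= span_cons (ltn_leqif (dimv_leqif_sup (addvSr _ _))) subv_add.
  by rewrite subvv andbT -memvE; apply/negP.
have := dimvS (subvf <<map f (i :: s)>>); lia.
Qed.

Lemma exists_common_multiple (T : finType) (Q : nat -> T -> Prop) :
    (forall D E t, Q D t -> Q (D * E)%N t) ->
    (forall t, exists2 D, (0 < D)%N & Q D t) ->
  exists2 D, (0 < D)%N & forall t, Q D t.
Proof.
move=> Q_mul Q_ex.
suff [D D_gt0 QD] : exists2 D, (0 < D)%N & {in enum T, forall t, Q D t}.
  by exists D => // t; apply: QD; rewrite mem_enum.
elim: (enum T) => [|t s [D D_gt0 QD]]; first by exists 1%N.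
have [E E_gt0 QE] := Q_ex t.
exists (D * E)%N => [|u /predU1P[->|/QD/Q_mul//]].
  by rewrite muln_gt0 D_gt0.
by rewrite mulnC; apply: Q_mul.
Qed.

Lemma denq_mul_int (r : rat) : exists2 D, (0 < D)%N & D%:R * r \is a Num.int.
Proof.
exists `|denq r|%N; first by rewrite absz_gt0 denq_neq0.
by rewrite natr_absz gtr0_norm ?denq_gt0 // mulrC -numqE intr_int.
Qed.

Lemma natr_mul_int (D E : nat) (r : rat) :
  D%:R * r \is a Num.int -> (D * E)%:R * r \is a Num.int.
Proof. by move=> Dr_int; rewrite natrM mulrAC rpredM ?rpred_nat. Qed.

Section Shifts.

Variables p q : nat.
Implicit Types (A : series p q) (S U : seq 'I_p) (T W : seq 'I_q).

Lemma rho_nil A U W : rho [::] [::] A U W = A U W.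
Proof. by rewrite /rho !cats0. Qed.

Lemma rho_rcons A S T U W x y :
  rho S T A (rcons U x) (rcons W y) = rho (x :: S) (y :: T) A U W.
Proof. by rewrite /rho -!cats1 -!catA. Qed.

Definition in_span m (F : 'I_m -> series p q) (G : series p q) : Prop :=
  exists c : 'I_m -> rat,
    forall U W, size U = size W -> G U W = \sum_i c i * F i U W.

Definition combination k (B : 'I_k -> series p q) (c : 'rV[rat]_k) :
  series p q := fun U W => \sum_i c 0 i * B i U W.

Lemma combination_sum k (B : 'I_k -> series p q) d (l : 'I_d -> rat) X U W :
  combination B (\sum_j l j *: X j) U W =
    \sum_j l j * combination B (X j) U W.
Proof.
rewrite /combination; under eq_bigr => i _ do rewrite summxE big_distrl /=.
rewrite exchange_big; apply: eq_bigr => j _; rewrite big_distrr.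
by apply: eq_bigr => i _; rewrite mxE -mulrA.
Qed.

Lemma Rec_spanning_shifts A : Rec A ->
  exists m (S : 'I_m.+1 -> seq 'I_p) (T : 'I_m.+1 -> seq 'I_q),
  [/\ S ord0 = [::], T ord0 = [::], forall j, size (S j) = size (T j)
    & forall S' T', size S' = size T' ->
        in_span (fun j => rho (S j) (T j) A) (rho S' T' A)].
Proof.
move=> [k [B B_span]].
(* Indexing by triples (S, T, c) makes the spanning argument return the
   pairs (S, T) with their coordinate vectors: no choice function is needed. *)
pose represents (t : seq 'I_p * seq 'I_q * 'rV[rat]_k) :=
  size t.1.1 = size t.1.2 /\
  forall U W, size U = size W -> rho t.1.1 t.1.2 A U W = combination B t.2 U W.
have represented S T : size S = size T -> exists c, represents (S, T, c).
  move=> ST; have [c c_span] := B_span S T ST.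
  exists (\row_i c i); split=> // U W UW.
  by rewrite c_span //; apply: eq_bigr => i _; rewrite mxE.
have [s [s_rep s_span]] := exists_spanning_seq represents (fun t => t.2).
have [c0 rep0] := represented [::] [::] erefl.
pose t0 := ([::] : seq 'I_p, [::] : seq 'I_q, c0).
pose L := t0 :: s.
have L_rep j : (j < size L)%N -> represents (nth t0 L j).
  by move=> /(mem_nth t0) /predU1P[->|/s_rep].
pose X := map (fun t => t.2) L.
have jL (j : 'I_(size X)) : (j < size L)%N.
  by rewrite -(size_map (fun t => t.2)).
exists (size (map (fun t => t.2) s)).
exists (fun j => (nth t0 L j).1.1), (fun j => (nth t0 L j).1.2).
split=> // [j | S T ST]; first exact: (L_rep _ (jL j)).1.
have [c [_ c_rep]] := represented S T ST.
have c_in : c \in <<in_tuple X>>%VS.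
  rewrite span_cons; apply: subvP (addvSr _ _) _ _.
  exact: (s_span (S, T, c)).
exists (fun j => coord (in_tuple X) j c) => U W UW.
rewrite c_rep // {1}(coord_span c_in) combination_sum; apply: eq_bigr => j _.
by rewrite (nth_map t0) ?jL // -(L_rep _ (jL j)).2.
Qed.

Lemma in_span_denominator m (F : 'I_m -> series p q) G : in_span F G ->
  exists2 D, (0 < D)%N & exists2 c : 'I_m -> rat,
    (forall i, D%:R * c i \is a Num.int) &
    forall U W, size U = size W -> G U W = \sum_i c i * F i U W.
Proof.
move=> [c c_span].
have [D D_gt0 D_c] := exists_common_multiple
  (fun D E i => @natr_mul_int D E (c i)) (fun i => denq_mul_int (c i)).
by exists D => //; exists c.
Qed.

Lemma family_scaled_int m (F : 'I_m -> series p q) (D : nat) :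
    (forall x y j, exists2 c : 'I_m -> rat,
       (forall i, D%:R * c i \is a Num.int) &
       forall U W, size U = size W ->
         F j (rcons U x) (rcons W y) = \sum_i c i * F i U W) ->
    (forall j, D%:R * F j [::] [::] \is a Num.int) ->
  forall n U W, size U = n -> size W = n ->
    forall j, D%:R ^+ n.+1 * F j U W \is a Num.int.
Proof.
move=> F_step F_nil; elim=> [|n IH] U W.
  by move=> /size0nil -> /size0nil -> j; rewrite expr1.
case/lastP: U => [//|U x]; case/lastP: W => [//|W y].
rewrite !size_rcons => -[sU] [sW] j.
have [c c_int ->] := F_step x y j; last by rewrite sU sW.
rewrite mulr_sumr; apply: rpred_sum => i _.
by rewrite exprS mulrACA rpredM ?c_int ?IH.
Qed.

End Shifts.

Theorem mainTheorem9 (p q : nat) (A : series p q) :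
  Rec A ->
  exists N : nat, (0 < N)%N /\
    forall (n : nat) (U : seq 'I_p) (W : seq 'I_q),
      size U = n -> size W = n ->
      (N%:R ^+ n.+1 * A U W : rat) \is a Num.int.
Proof.
move=> /Rec_spanning_shifts[m [S [T [S0 T0 ST S_span]]]].
pose F j := rho (S j) (T j) A.
pose steps D (t : 'I_p * 'I_q * 'I_m.+1) := exists2 c : 'I_m.+1 -> rat,
  (forall i, D%:R * c i \is a Num.int) &
  forall U W, size U = size W ->
    F t.2 (rcons U t.1.1) (rcons W t.1.2) = \sum_i c i * F i U W.
have [D1 D1_gt0 D1_steps] : exists2 D, (0 < D)%N & forall t, steps D t.
  apply: exists_common_multiple => [D E t [c c_int c_step] | [[x y] j]].
    by exists c => // i; apply: natr_mul_int.
  have := S_span (x :: S j) (y :: T j) (congr1 succn (ST j)).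
  move=> /in_span_denominator[D D_gt0 [c c_int c_step]].
  by exists D => //; exists c => // U W UW; rewrite /F rho_rcons c_step.
have [D2 D2_gt0 D2_nil] := exists_common_multiple
  (fun D E j => @natr_mul_int D E (F j [::] [::])) (fun j => denq_mul_int _).
exists (D1 * D2)%N; split=> [|n U W sU sW]; first by rewrite muln_gt0 D1_gt0.
rewrite -rho_nil -S0 -T0.
apply: (family_scaled_int (F := F) _ _ sU sW) => [x y j | j].
  have [c c_int c_step] := D1_steps (x, y, j).
  by exists c => // i; apply: natr_mul_int.
by rewrite mulnC; apply: natr_mul_int.
Qed.
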